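(* Let $n\ge 2$ and let $S=\{A_1,\dots,A_m\}$ be a finite set of real $n\times n$ matrices such that every $A\in S$ satisfies $A\mathbf{1}=\mathbf{1}$ and $\|Ax\|_{\mathcal{P}}\le\|x\|_{\mathcal{P}}$ for all $x\in\mathbb{R}^n$. Consider the switched system $x(t+1)=A_{\sigma(t)}x(t)$, $x(0)=x_0$, with $\sigma:\mathbb{N}\to\{1,\dots,m\}$. Then there exists a sequence $\sigma$ such that for every initial condition $x_0$ the trajectory converges to a multiple of $\mathbf{1}$ if and only if for every $x_0\in\mathcal{P}$ there exists $\sigma$ with $A_{\sigma(N-1)}\cdots A_{\sigma(0)}x_0\in\operatorname{int}(\mathcal{P})$, where $N=\tfrac12(3^n-2^{n+1}+1)$.
   Context: $\mathbf{1}=(1,\dots,1)^\top\in\mathbb{R}^n$. The seminorm is $\|x\|_{\mathcal{P}}=\tfrac12(\max_i x_i-\min_i x_i)$ and $\mathcal{P}=\{x:\|x\|_{\mathcal{P}}\le 1\}$. ($N$ equals the number of pairs $\{F,-F\}$ of opposite proper open faces of the polyhedron $\mathcal{P}$.) *)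

From HB Require Import structures.
From mathcomp Require Import all_boot all_order all_algebra.
From mathcomp Require Import all_classical all_reals all_analysis.
Set Implicit Arguments. Unset Strict Implicit. Unset Printing Implicit Defensive.
Import Order.TTheory GRing.Theory Num.Theory.
Import numFieldNormedType.Exports.
Local Open Scope classical_set_scope.
Local Open Scope ring_scope.

Definition ones (R : realType) (n : nat) : 'cV[R]_n := const_mx 1.

(* max_i x_i and min_i x_i (meaningful for n >= 1) *)
Definition vmax (R : realType) (n : nat) (x : 'cV[R]_n) : R :=
  let v := [seq x i 0 | i <- enum 'I_n] in \big[Num.max/head 0 v]_(a <- v) a.
Definition vmin (R : realType) (n : nat) (x : 'cV[R]_n) : R :=
  let v := [seq x i 0 | i <- enum 'I_n] in \big[Num.min/head 0 v]_(a <- v) a.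

Definition seminormP (R : realType) (n : nat) (x : 'cV[R]_n) : R :=
  (vmax x - vmin x) / 2.

Definition polP (R : realType) (n : nat) : set 'cV[R]_n :=
  [set x | seminormP x <= 1].

Fixpoint traj (R : realType) (n m : nat) (A : 'I_m -> 'M[R]_n)
  (sigma : nat -> 'I_m) (x0 : 'cV[R]_n) (t : nat) : 'cV[R]_n :=
  match t with
  | 0 => x0
  | t'.+1 => A (sigma t') *m traj A sigma x0 t'
  end.

Definition Nbound (n : nat) : nat := ((3 ^ n + 1 - 2 ^ n.+1) %/ 2)%N.

(* Adding a multiple of [ones] does not change [seminormP], and modulo [ones] the
   extreme points of [polP] are the sign vectors.  Hence a product [M] of the
   [A k] that maps every sign vector into the interior of [polP] is a strict
   contraction for [seminormP], and switching periodically along it drives every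
   trajectory geometrically to consensus.  If every point of [polP] can be
   steered into the interior, such a product is obtained by steering the sign
   vectors one after the other.
   Conversely, a trajectory entering the interior at time [T] stays on the
   boundary before.  A boundary point lies in the relative interior of the face
   recording which of its coordinates are maximal or minimal, and whether a
   product maps it into the interior depends only on that face.  If two times
   carry the same face up to the symmetry [x |-> - x], the switching between them
   can be cut out; so a shortest steering visits distinct pairs of opposite faces
   and takes at most [Nbound n] steps. *)

From HB Require Import structures.
From mathcomp Require Import all_boot all_order all_algebra.
From mathcomp Require Import all_classical all_reals all_analysis.
From mathcomp Require Import ring lra zify.
Import Order.TTheory GRing.Theory Num.Theory.
Import numFieldNormedType.Exports.
Local Open Scope classical_set_scope.
Local Open Scope ring_scope.
Set Implicit Arguments. Unset Strict Implicit. Unset Printing Implicit Defensive.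

Section Seminorm.
Variables (R : realType) (n : nat).
Implicit Types (x : 'cV[R]_n) (b : R).

Lemma vmax_ge x i : x i 0 <= vmax x.
Proof.
rewrite /vmax; apply: (le_bigmax_seq _ (x i 0)) => //.
by apply: map_f; rewrite mem_enum.
Qed.

Lemma vmin_le x i : vmin x <= x i 0.
Proof.
rewrite /vmin; apply: (ge_bigmin_seq _ (x i 0)) => //.
by apply: map_f; rewrite mem_enum.
Qed.

Lemma diff_le_seminormP x i j : x i 0 - x j 0 <= 2 * seminormP x.
Proof. by rewrite /seminormP mulrC divfK // lerB ?vmax_ge ?vmin_le. Qed.

Hypothesis n_gt0 : (0 < n)%N.

Let i0 : 'I_n := Ordinal n_gt0.

Let coords x := [seq x i 0 | i <- enum 'I_n].

Let head_coords x : head 0 (coords x) \in coords x.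
Proof.
have : x i0 0 \in coords x by apply: map_f; rewrite mem_enum.
by case: (coords x) => //= a v _; rewrite mem_head.
Qed.

Lemma vmax_attained x : exists i, vmax x = x i 0.
Proof.
suff : vmax x \in coords x by case/mapP=> i _ ->; exists i.
rewrite /vmax -/(coords x) big_seq.
apply: (big_ind (fun y : R => is_true (y \in coords x))) => [|a b|//].
  exact: head_coords.
by rewrite /Order.max; case: ifP.
Qed.

Lemma vmin_attained x : exists i, vmin x = x i 0.
Proof.
suff : vmin x \in coords x by case/mapP=> i _ ->; exists i.
rewrite /vmin -/(coords x) big_seq.
apply: (big_ind (fun y : R => is_true (y \in coords x))) => [|a b|//].
  exact: head_coords.
by rewrite /Order.min; case: ifP.
Qed.

Lemma seminormP_attained x : exists i j, x i 0 - x j 0 = 2 * seminormP x.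
Proof.
have [i Ei] := vmax_attained x; have [j Ej] := vmin_attained x.
by exists i, j; rewrite /seminormP -Ei -Ej mulrC divfK.
Qed.

Lemma seminormP_ge0 x : 0 <= seminormP x.
Proof. by rewrite -(pmulr_rge0 _ (ltr0Sn _ 1)) -(subrr (x i0 0)) diff_le_seminormP. Qed.

Lemma seminormP_le x b : (forall i j, x i 0 - x j 0 <= 2 * b) -> seminormP x <= b.
Proof.
move=> le_xb; have [i [j eq_ij]] := seminormP_attained x.
by rewrite -(ler_pM2l (ltr0Sn R 1)) -eq_ij.
Qed.

Lemma seminormP_lt x b : (forall i j, x i 0 - x j 0 < 2 * b) -> seminormP x < b.
Proof.
move=> lt_xb; have [i [j eq_ij]] := seminormP_attained x.
by rewrite -(ltr_pM2l (ltr0Sn R 1)) -eq_ij.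
Qed.

Lemma seminormPN x : seminormP (- x) = seminormP x.
Proof.
apply/eqP; rewrite eq_le; apply/andP; split; apply: seminormP_le => i j.
  by rewrite !mxE opprK addrC diff_le_seminormP.
by have := diff_le_seminormP (- x) j i; rewrite !mxE opprK addrC.
Qed.

End Seminorm.

Section Words.
Variables (R : realType) (n m : nat) (A : 'I_m -> 'M[R]_n).

Definition word_mx (s : seq 'I_m) : 'M[R]_n := foldr (fun a M => A a *m M) 1%:M s.

Lemma word_mx_cat s1 s2 : word_mx (s1 ++ s2) = word_mx s1 *m word_mx s2.
Proof. by elim: s1 => [|a s1 IH] /=; rewrite ?mul1mx // IH mulmxA. Qed.

Lemma traj_word_mx sigma x t :
  traj A sigma x t = word_mx (rev [seq sigma u | u <- iota 0 t]) *m x.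
Proof.
elim: t => [|t IH]; first by rewrite mul1mx.
by rewrite [LHS]/= IH -[t.+1]addn1 iotaD map_cat rev_cat /= mulmxA.
Qed.

Lemma trajD sigma x t u :
  traj A sigma x (t + u) = traj A (fun v => sigma (t + v)%N) (traj A sigma x t) u.
Proof. by elim: u => [|u IH] /=; rewrite ?addn0 // addnS /= IH. Qed.

Lemma eq_traj sigma sigma' x t : (forall u, (u < t)%N -> sigma u = sigma' u) ->
  traj A sigma x t = traj A sigma' x t.
Proof.
elim: t => [|t IH] //= eq_sigma.
by rewrite eq_sigma // IH // => u /ltnW; apply: eq_sigma.
Qed.

Hypothesis A_ones : forall k, A k *m ones R n = ones R n.
Hypothesis A_nonexpansive : forall k x, seminormP (A k *m x) <= seminormP x.

Lemma word_mx_ones s : word_mx s *m ones R n = ones R n.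
Proof. by elim: s => [|a s IH] /=; rewrite ?mul1mx // -mulmxA IH A_ones. Qed.

Lemma seminormP_word_mx s x : seminormP (word_mx s *m x) <= seminormP x.
Proof.
elim: s => [|a s IH] /=; first by rewrite mul1mx.
by rewrite -mulmxA (le_trans (A_nonexpansive _ _) IH).
Qed.

Lemma seminormP_traj sigma x t : seminormP (traj A sigma x t) <= seminormP x.
Proof. by rewrite traj_word_mx seminormP_word_mx. Qed.

Lemma seminormP_traj_le sigma x t u : (t <= u)%N ->
  seminormP (traj A sigma x u) <= seminormP (traj A sigma x t).
Proof. by move=> le_tu; rewrite -(subnKC le_tu) trajD seminormP_traj. Qed.

End Words.

Definition signv (R : realType) n (S : {set 'I_n}) : 'cV[R]_n :=
  \col_i (if i \in S then 1 else -1).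

Lemma sum_mulr_shift (R : realType) (I : finType) (c v : I -> R) t :
  \sum_k c k = 0 -> \sum_k c k * v k = \sum_k c k * (v k - t).
Proof.
move=> c0; under [RHS]eq_bigr do rewrite mulrBr.
by rewrite sumrB -mulr_suml c0 mul0r subr0.
Qed.

Lemma row_sum_ones (R : realType) n (M : 'M[R]_n) i : (M *m ones R n) i 0 = \sum_k M i k.
Proof. by rewrite mxE; apply: eq_bigr => k _; rewrite mxE mulr1. Qed.

Section Contraction.
Variables (R : realType) (n : nat).
Hypothesis n_gt0 : (0 < n)%N.
Implicit Type S : {set 'I_n}.

Lemma seminormP_signv S : seminormP (signv R S) <= 1.
Proof.
apply: seminormP_le => // i j; rewrite !mxE mulr1.
by case: (i \in S); case: (j \in S); lra.
Qed.

(* Row [i] minus row [j] of [M] sums to [0], so over [polP] it is maximised by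
   the sign vector of its positive part. *)
Lemma seminormP_contraction (M : 'M[R]_n) (rho : R) :
  M *m ones R n = ones R n -> (forall S, seminormP (M *m signv R S) <= rho) ->
  forall x, seminormP (M *m x) <= rho * seminormP x.
Proof.
move=> M_ones M_signv x; apply: seminormP_le => // i j.
pose c k := M i k - M j k; pose S := [set k | 0 < c k]%SET.
have c_sum0 : \sum_k c k = 0.
  by rewrite sumrB -!row_sum_ones M_ones !mxE subrr.
have -> : (M *m x) i 0 - (M *m x) j 0 = \sum_k c k * (x k 0 - vmin x).
  by rewrite -sum_mulr_shift // !mxE -sumrB; apply: eq_bigr => k _; rewrite mulrBl.
have signv_diff : (M *m signv R S) i 0 - (M *m signv R S) j 0
    = \sum_k (if k \in S then 2 * c k else 0) - \sum_k c k.
  rewrite !mxE -!sumrB; apply: eq_bigr => k _.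
  by rewrite !mxE /c; case: (k \in S); lra.
rewrite c_sum0 subr0 in signv_diff.
apply: le_trans (_ : \sum_k (if k \in S then 2 * c k else 0) * seminormP x <= _).
  apply: ler_sum => k _; rewrite inE.
  have := vmin_le x k; have := vmax_ge x k; have := seminormP_ge0 n_gt0 x.
  rewrite /seminormP.
  by case: ltP => ck; nra.
rewrite -mulr_suml -signv_diff mulrA ler_wpM2r ?seminormP_ge0 //.
exact: le_trans (diff_le_seminormP _ _ _) (ler_wpM2l _ (M_signv S)).
Qed.

End Contraction.

Section ContractingWord.
Variables (R : realType) (n m : nat) (A : 'I_m -> 'M[R]_n).
Hypothesis n_gt0 : (0 < n)%N.
Hypothesis A_nonexpansive : forall k x, seminormP (A k *m x) <= seminormP x.

Definition contracting_word (s : seq 'I_m) :=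
  forall S : {set 'I_n}, seminormP (word_mx A s *m signv R S) < 1.

Let bad s := [set S : {set 'I_n} | 1 <= seminormP (word_mx A s *m signv R S)]%SET.

Lemma exists_contracting_word N :
  (forall x, seminormP x <= 1 -> exists sigma, seminormP (traj A sigma x N) < 1) ->
  exists s, contracting_word s.
Proof.
move=> steer.
have shrink_bad s S : S \in bad s -> exists t, bad (t ++ s) \proper bad s.
  move=> badS; have x_le1 := le_trans (seminormP_word_mx A_nonexpansive s (signv R S))
    (seminormP_signv R n_gt0 S).
  have [sigma lt1] := steer _ x_le1; rewrite traj_word_mx mulmxA -word_mx_cat in lt1.
  exists (rev [seq sigma u | u <- iota 0 N]); apply/properP; split.
    apply/fintype.subsetP => T; rewrite /bad !inE word_mx_cat -mulmxA => /le_trans; apply.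
    exact: seminormP_word_mx.
  by exists S; rewrite // inE -ltNge.
suff good_below k s : (#|bad s| < k)%N -> exists s', contracting_word s'.
  exact: (good_below _ [::] (ltnSn _)).
elim: k s => // k IH s lt_bad.
have [bad0|[S badS]] := set_0Vmem (bad s).
  exists s => S; rewrite ltNge; apply/negP => le1.
  have : S \notin bad s by rewrite bad0 inE.
  by rewrite /bad inE le1.
have [t sub_bad] := shrink_bad s S badS.
exact: IH _ (leq_trans (proper_card sub_bad) (ltnSE lt_bad)).
Qed.

End ContractingWord.

Section Interior.
Variables (R : realType) (n : nat).
Hypothesis n_gt0 : (0 < n)%N.

Lemma interior_polP (y : 'cV[R]_n) : interior (@polP R n) y <-> seminormP y < 1.
Proof.
split=> [/nbhs_ballP[e /= e_gt0 ball_sub] | lt1].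
  pose d := e / (2 * (`|y| + 1)).
  have d_gt0 : 0 < d by rewrite divr_gt0 // mulr_gt0 // ltr_wpDl.
  have : ball y e ((1 + d) *: y).
    rewrite -ball_normE /ball_ /= scalerDl scale1r opprD addrA subrr sub0r normrN.
    rewrite normrZ ger0_norm ?ltW // /d mulrAC ltr_pdivrMr ?mulr_gt0 ?ltr_wpDl //.
    by have := normr_ge0 y; nra.
  move/ball_sub; rewrite /polP /=; have [i [j eq_ij]] := seminormP_attained n_gt0 y.
  have := diff_le_seminormP ((1 + d) *: y) i j; rewrite !mxE -mulrBr eq_ij.
  by have := seminormP_ge0 n_gt0 y; nra.
pose e := (1 - seminormP y) / 2.
have e_gt0 : 0 < e by rewrite divr_gt0 // subr_gt0.
apply/nbhs_ballP; exists e => // z [_ near_z]; apply: seminormP_le => // i j.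
have := near_z i 0; have := near_z j 0; rewrite -!ball_normE /ball_ /= !ltr_norml.
by have := diff_le_seminormP y i j; rewrite /e; lra.
Qed.

Lemma consensus_limit_interior (u : nat -> 'cV[R]_n) (c : R) :
  u @ \oo --> c *: ones R n -> exists T, seminormP (u T) < 1.
Proof.
have half_gt0 : 0 < 1 / 2 :> R by lra.
move=> /cvgrPdist_lt /(_ _ half_gt0) [T _ near_c].
exists T; have : ball (c *: ones R n) (1 / 2) (u T).
  by rewrite -ball_normE; apply: near_c => /=.
case=> _ near_uT; apply: seminormP_lt => // i j.
have := near_uT i 0; have := near_uT j 0.
by rewrite -!ball_normE /ball_ /= !mxE !ltr_norml mulr1; lra.
Qed.

End Interior.

Section ConsensusConvergence.
Variables (R : realType) (n : nat) (y : nat -> 'cV[R]_n) (K rho : R) (p : nat).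
Hypothesis n_gt0 : (0 < n)%N.
Hypotheses (p_gt0 : (0 < p)%N) (K_ge0 : 0 <= K) (rho_ge0 : 0 <= rho) (rho_lt1 : rho < 1).

Let s t := seminormP (y t).

Hypothesis y_step : forall t i, `|y t.+1 i 0 - y t i 0| <= K * s t.
Hypothesis s_nonincreasing : forall t u, (t <= u)%N -> s u <= s t.
Hypothesis s_period : forall t, s (t + p) <= rho * s t.

Let s_ge0 t : 0 <= s t. Proof. exact: seminormP_ge0. Qed.

Lemma seminormP_geometric k : s (k * p) <= rho ^+ k * s 0.
Proof.
elim: k => [|k IH]; first by rewrite mul0n expr0 mul1r.
rewrite mulSnr exprS -mulrA; apply: le_trans (s_period _) _.
exact: ler_wpM2l.
Qed.

Lemma seminormP_vanishes e : 0 < e -> exists T, forall t, (T <= t)%N -> s t < e.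
Proof.
move=> e_gt0; have e'_gt0 : 0 < e / (s 0 + 1) by rewrite divr_gt0 ?ltr_wpDl.
have rho_norm : `|rho| < 1 by rewrite ger0_norm.
have /cvgrPdist_lt /(_ _ e'_gt0) [k _ small_k] := cvg_expr rho_norm.
have {small_k} : rho ^+ k < e / (s 0 + 1).
  by have := small_k k (leqnn k); rewrite /= sub0r normrN ger0_norm ?exprn_ge0.
rewrite ltr_pdivlMr ?ltr_wpDl // => small_k.
exists (k * p)%N => t le_kp_t; apply: le_lt_trans (s_nonincreasing le_kp_t) _.
apply: le_lt_trans (seminormP_geometric k) _.
have := s_ge0 0; have := exprn_ge0 k rho_ge0; nra.
Qed.

Lemma traj_increments t u i : `|y (t + u) i 0 - y t i 0| <= u%:R * K * s t.
Proof.
elim: u => [|u IH]; first by rewrite addn0 subrr normr0 !mul0r.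
rewrite addnS -natr1; apply: le_trans (ler_distD (y (t + u) i 0) _ _) _.
have : K * s (t + u) <= K * s t by rewrite ler_wpM2l // s_nonincreasing ?leq_addr.
by have := y_step (t + u) i; lra.
Qed.

Let C := p%:R * K / (1 - rho).

Let C_ge0 : 0 <= C.
Proof. by rewrite divr_ge0 ?mulr_ge0 // subr_ge0 ltW. Qed.

(* The tail is a geometric series: [C] solves [C = rho * C + p * K]. *)
Lemma traj_tail t u i : `|y (t + u) i 0 - y t i 0| <= C * s t.
Proof.
elim/ltn_ind: u t => u IH t.
have CE : C * (1 - rho) = p%:R * K by rewrite divfK // subr_eq0 gt_eqF.
have pK_le_C : p%:R * K <= C.
  by rewrite -CE ler_piMr // ?mulr_ge0 // lerBlDr lerDl.
have [le_up | lt_pu] := leqP u p.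
  apply: le_trans (traj_increments t u i) (ler_wpM2r (s_ge0 t) _).
  by apply: le_trans pK_le_C; rewrite ler_wpM2r // ler_nat.
have -> : (t + u = (t + p) + (u - p))%N by rewrite -addnA subnKC // ltnW.
apply: le_trans (ler_distD (y (t + p) i 0) _ _) _.
have lt_u : (u - p < u)%N by rewrite ltn_subrL p_gt0 (ltn_trans p_gt0 lt_pu).
have := IH (u - p)%N lt_u (t + p)%N.
have := traj_increments t p i; have := s_period t.
have : C * s (t + p) <= C * (rho * s t) by apply: ler_wpM2l.
have : p%:R * K * s t = C * s t - C * (rho * s t) by rewrite -CE; ring.
lra.
Qed.

Theorem consensus_cvg : exists c, y @ \oo --> c *: ones R n.
Proof.
pose i0 := Ordinal n_gt0; pose y0 t := y t i0 0.
have : cvg (y0 @ \oo).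
  apply/cauchy_cvgP/cauchy_exP => e e_gt0.
  have e'_gt0 : 0 < e / (C + 1) by rewrite divr_gt0 ?ltr_wpDl.
  have [T small_T] := seminormP_vanishes e'_gt0.
  exists (y0 T), T => // t /= le_Tt; rewrite -ball_normE /ball_ /= distrC /y0.
  rewrite -(subnKC le_Tt); apply: le_lt_trans (traj_tail T (t - T) i0) _.
  have := small_T T (leqnn T); rewrite ltr_pdivlMr ?ltr_wpDl // => small.
  have := s_ge0 T; nra.
set c := lim (y0 @ \oo) => /cvgrPdist_lt y0_c; exists c.
apply/cvgrPdist_lt => e e_gt0.
have e2_gt0 : 0 < e / 2 by rewrite divr_gt0.
have [T1 _ near_c] := y0_c _ e2_gt0.
have e4_gt0 : 0 < e / 4 by rewrite divr_gt0.
have [T2 small] := seminormP_vanishes e4_gt0.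
exists (maxn T1 T2) => // t /=; rewrite geq_max => /andP[le_T1t le_T2t].
suff : ball (c *: ones R n) e (y t) by rewrite -ball_normE.
split=> // i j; rewrite -ball_normE /ball_ /= (ord1 j) !mxE mulr1.
have := near_c t le_T1t; have := small t le_T2t; rewrite /= /y0 !ltr_norml.
have := diff_le_seminormP (y t) i0 i; have := diff_le_seminormP (y t) i i0.
rewrite -/(s t); lra.
Qed.

End ConsensusConvergence.

Lemma norm_mulmx_ones0 (R : realType) n (B : 'M[R]_n) (x : 'cV[R]_n) i :
  B *m ones R n = 0 -> `|(B *m x) i 0| <= 2 * (\sum_j `|B i j|) * seminormP x.
Proof.
move=> B_ones; have row_sum0 : \sum_j B i j = 0 by rewrite -row_sum_ones B_ones mxE.
rewrite mxE (sum_mulr_shift _ (vmin x) row_sum0) (mulrC 2) -mulrA mulr_suml.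
apply: le_trans (ler_norm_sum _ _ _) (ler_sum _ _) => j _.
have := vmin_le x j; have := vmax_ge x j; rewrite normrM /seminormP => le_max le_min.
by rewrite (ger0_norm (x := _ - _)) ?subr_ge0 // ler_wpM2l //; lra.
Qed.

Section PeriodicSwitching.
Variables (R : realType) (n m : nat) (A : 'I_m -> 'M[R]_n).
Hypothesis n_gt0 : (0 < n)%N.
Hypothesis A_ones : forall k, A k *m ones R n = ones R n.
Hypothesis A_nonexpansive : forall k x, seminormP (A k *m x) <= seminormP x.

Lemma exists_step_bound : exists2 K, 0 <= K &
  forall k (x : 'cV[R]_n) i, `|(A k *m x) i 0 - x i 0| <= K * seminormP x.
Proof.
pose K := \big[Num.max/0]_k \big[Num.max/0]_i (2 * \sum_j `|(A k - 1%:M) i j|).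
exists K => [|k x i]; first exact: bigmax_ge_id.
have -> : (A k *m x) i 0 - x i 0 = ((A k - 1%:M) *m x) i 0.
  by rewrite mulmxBl mul1mx !mxE.
apply: le_trans (norm_mulmx_ones0 _ _ _) _; first by rewrite mulmxBl mul1mx A_ones subrr.
apply: ler_wpM2r; first exact: seminormP_ge0.
apply: le_trans (le_bigmax _ _ k); exact: (le_bigmax _ (fun i => 2 * _) i).
Qed.

Variables (s : seq 'I_m) (a : 'I_m).
Hypothesis s_contracting : contracting_word A s.
Hypothesis s_neq0 : s != [::].

Definition word_switching (t : nat) : 'I_m := nth a (rev s) (t %% size s).

Let L := size s.
Let L_gt0 : (0 < L)%N. Proof. by rewrite lt0n size_eq0. Qed.
Let sigma := word_switching.

Lemma traj_word_switching x k :
  traj A sigma x (k.+1 * L) = word_mx A s *m traj A sigma x (k * L).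
Proof.
rewrite mulSnr trajD traj_word_mx; congr (word_mx _ _ *m _).
rewrite -[RHS]revK -(mkseq_nth a (rev s)) size_rev; congr rev.
apply/eq_in_map => t; rewrite mem_iota add0n => /andP[_ lt_tL].
by rewrite /sigma /word_switching modnMDl modn_small.
Qed.

Let rho := \big[Num.max/0]_(S : {set 'I_n}) seminormP (word_mx A s *m signv R S).

Let rho_ge0 : 0 <= rho. Proof. exact: bigmax_ge_id. Qed.
Let rho_lt1 : rho < 1. Proof. by apply/bigmax_ltP; split=> // S _; apply: s_contracting. Qed.

Lemma seminormP_traj_word_switching x t :
  seminormP (traj A sigma x (t + 2 * L)) <= rho * seminormP (traj A sigma x t).
Proof.
pose k := (t %/ L).+1.
have le_t_kL : (t <= k * L)%N by rewrite mulSnr {1}(divn_eq t L) leq_add2l ltnW ?ltn_mod.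
have le_kL_t2L : (k.+1 * L <= t + 2 * L)%N.
  by rewrite /k !mulSnr; have := leq_divM t L; lia.
apply: le_trans (seminormP_traj_le A_nonexpansive _ _ le_kL_t2L) _.
have contraction := seminormP_contraction n_gt0 (word_mx_ones A_ones s)
  (fun S => le_bigmax 0 (fun S => seminormP (word_mx A s *m signv R S)) S).
rewrite traj_word_switching; apply: le_trans (contraction _) _.
by rewrite ler_wpM2l // seminormP_traj_le.
Qed.

Theorem word_switching_consensus x : exists c, traj A sigma x @ \oo --> c *: ones R n.
Proof.
have [K K_ge0 step_K] := exists_step_bound.
apply: (consensus_cvg (K := K) (rho := rho) (p := 2 * L)) => //.
- by rewrite muln_gt0 L_gt0.
- by move=> t i; apply: step_K.
- by move=> t u; apply: seminormP_traj_le.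
- exact: seminormP_traj_word_switching.
Qed.

End PeriodicSwitching.

(* When [seminormP x = 1], [face_type x]
   determines the face of [polP] containing [x] in its relative interior. *)
Definition face_type (R : realType) n (x : 'cV[R]_n) : {ffun 'I_n -> option bool} :=
  [ffun k => if x k 0 == vmax x then Some true
             else if x k 0 == vmin x then Some false else None].

Definition two_sided_types n : {set {ffun 'I_n -> option bool}} :=
  [set f | (f \notin ffun_on (predC1 (Some true)))
           && (f \notin ffun_on (predC1 (Some false)))]%SET.

Lemma card_two_sided_types n : (#|two_sided_types n| + 2 ^ n.+1 <= 3 ^ n + 1)%N.
Proof.
pose avoid b := [set f : {ffun 'I_n -> option bool} | f \in ffun_on (predC1 (Some b))]%SET.
have card_avoid b : #|avoid b| = (2 ^ n)%N.
  by rewrite cardsE card_ffun_on cardC1 card_option card_bool card_ord.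
have card_avoid_both : (#|avoid true :&: avoid false| <= 1)%N.
  rewrite -(cards1 ([ffun => None] : {ffun 'I_n -> option bool})).
  apply/subset_leq_card/fintype.subsetP => f.
  rewrite !inE => /andP[/ffun_onP f_true /ffun_onP f_false]; apply/eqP/ffunP => k.
  by have := f_true k; have := f_false k; rewrite !inE ffunE; case: (f k) => [[]|].
have -> : two_sided_types n = ~: (avoid true :|: avoid false).
  by apply/setP => f; rewrite !inE negb_or.
have := cardsC (avoid true :|: avoid false); have := cardsUI (avoid true) (avoid false).
rewrite card_ffun card_option card_bool card_ord !card_avoid expnS.
set U := #|_ :|: _|; set I := #|_ :&: _|; set C := #|~: _|; lia.
Qed.

Lemma leq_Nbound n T : (T.*2 + 2 ^ n.+1 <= 3 ^ n + 1)%N -> (T <= Nbound n)%N.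
Proof. by rewrite /Nbound leq_divRL //; lia. Qed.

Definition signed (R : realType) n (b : bool) (x : 'cV[R]_n) := if b then x else - x.

Section FaceTypes.
Variables (R : realType) (n : nat).
Hypothesis n_gt0 : (0 < n)%N.
Implicit Types (x y : 'cV[R]_n) (M : 'M[R]_n).

Lemma seminormP_signed b x : seminormP (signed b x) = seminormP x.
Proof. by case: b; rewrite /= ?seminormPN. Qed.

Lemma mulmx_signed M b x : M *m signed b x = signed b (M *m x).
Proof. by case: b; rewrite /= ?mulmxN. Qed.

Lemma face_type_max x y k : face_type x = face_type y ->
  (x k 0 == vmax x) = (y k 0 == vmax y).
Proof.
move=> /ffunP/(_ k); rewrite !ffunE.
by do ![case: ifP => //].
Qed.

Lemma face_type_min x y k : face_type x = face_type y -> x k 0 != vmax x ->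
  (x k 0 == vmin x) = (y k 0 == vmin y).
Proof.
move=> eq_xy x_max; have := face_type_max k eq_xy; rewrite (negbTE x_max).
move/ffunP/(_ k): eq_xy; rewrite !ffunE (negbTE x_max) => + y_max; rewrite -y_max.
by do ![case: ifP => //].
Qed.

Lemma face_type_two_sided x : seminormP x = 1 -> face_type x \in two_sided_types n.
Proof.
move=> x1; have [k max_k] := vmax_attained n_gt0 x; have [l min_l] := vmin_attained n_gt0 x.
have l_max : (x l 0 == vmax x) = false.
  by apply/negbTE/eqP => eq_l; move: x1; rewrite /seminormP min_l eq_l subrr; lra.
rewrite inE; apply/andP; split; apply/negP => /ffun_onP f_on.
- by have := f_on k; rewrite !inE ffunE -max_k eqxx.
- by have := f_on l; rewrite !inE ffunE l_max -min_l eqxx.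
Qed.

Lemma face_type_oppN x : seminormP x = 1 -> face_type x != face_type (- x).
Proof.
move=> x1; apply/eqP => eq_type.
have [k max_k] := vmax_attained n_gt0 x; have [l min_l] := vmin_attained n_gt0 x.
have := face_type_max k eq_type; rewrite -max_k eqxx => /esym/eqP; rewrite mxE => max_k'.
have := vmax_ge (- x) l; rewrite mxE -max_k'.
by move: x1; rewrite /seminormP max_k min_l; lra.
Qed.

Lemma face_type_extend x y : seminormP x = 1 -> seminormP y = 1 ->
  face_type x = face_type y ->
  exists2 e, 0 < e & seminormP ((1 + e) *: x - e *: y) <= 1.
Proof.
move=> x1 y1 eq_type.
have x_range : vmax x - vmin x = 2 by move: x1; rewrite /seminormP; lra.
have y_range : vmax y - vmin y = 2 by move: y1; rewrite /seminormP; lra.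
pose g k := Num.min (if x k 0 == vmax x then 2 else vmax x - x k 0)
                    (if x k 0 == vmin x then 2 else x k 0 - vmin x).
pose d := \big[Num.min/2]_k g k.
have d_le k : d <= g k by apply: bigmin_le.
have d_gt0 : 0 < d.
  apply/bigmin_gtP; split=> // k _; rewrite lt_min.
  apply/andP; split; case: ifP => [_|/negbT ne] //.
    by rewrite subr_gt0 lt_neqAle ne vmax_ge.
  by rewrite subr_gt0 lt_neqAle eq_sym ne vmin_le.
exists (d / 4); first by rewrite divr_gt0.
apply: seminormP_le => // k l; rewrite !mxE.
have := diff_le_seminormP y k l; have := diff_le_seminormP y l k.
rewrite y1 => y_kl_le y_lk_le.
have : (x k 0 - x l 0 = 2 /\ y k 0 - y l 0 = 2) \/ x k 0 - x l 0 <= 2 - d.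
  have := d_le k; have := d_le l; rewrite /g !le_min.
  have := vmax_ge x l; have := vmin_le x k.
  case max_k: (x k 0 == vmax x); case min_l: (x l 0 == vmin x);
    move=> ? ? /andP[? ?] /andP[? ?]; try by right; lra.
  left; move/eqP: max_k => max_k; move/eqP: min_l => min_l.
  have l_max : x l 0 != vmax x by apply/eqP; lra.
  have /esym/eqP := face_type_max k eq_type; rewrite max_k eqxx.
  have /esym/eqP := face_type_min eq_type l_max; rewrite min_l eqxx.
  lra.
case=> [[x_kl y_kl] | x_kl].
  have -> : (1 + d / 4) * x k 0 - d / 4 * y k 0 - ((1 + d / 4) * x l 0 - d / 4 * y l 0)
    = (1 + d / 4) * (x k 0 - x l 0) - d / 4 * (y k 0 - y l 0) by ring.
  by rewrite x_kl y_kl; lra.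
nra.
Qed.

Lemma face_type_exit M x y : (forall z, seminormP (M *m z) <= seminormP z) ->
  seminormP x = 1 -> seminormP y = 1 -> face_type x = face_type y ->
  seminormP (M *m y) < 1 -> seminormP (M *m x) < 1.
Proof.
move=> M_nonexpansive x1 y1 eq_type; rewrite !ltNge; apply: contra => Mx_ge1.
have [e e_gt0 w_le1] := face_type_extend x1 y1 eq_type.
have := le_trans (M_nonexpansive _) w_le1; rewrite mulmxBr -!scalemxAr.
have Mx1 : seminormP (M *m x) = 1.
  by apply: le_anti; rewrite Mx_ge1 -x1 M_nonexpansive.
have [i [j]] := seminormP_attained n_gt0 (M *m x).
have := diff_le_seminormP (M *m y) i j; move: Mx1.
set u := M *m x; set v := M *m y => -> My_ij Mx_ij Mw_le1; clearbody u v.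
have := diff_le_seminormP ((1 + e) *: u - e *: v) i j; rewrite !mxE.
have -> : (1 + e) * u i 0 - e * v i 0 - ((1 + e) * u j 0 - e * v j 0)
    = (1 + e) * (u i 0 - u j 0) - e * (v i 0 - v j 0) by ring.
rewrite Mx_ij => Mw_ij.
have : e * 2 <= e * (v i 0 - v j 0) by lra.
by rewrite ler_pM2l //; lra.
Qed.

End FaceTypes.

Lemma two_sided_injection_bound n T (g : 'I_T * bool -> {ffun 'I_n -> option bool}) :
  injective g -> (forall p, g p \in two_sided_types n) -> (T <= Nbound n)%N.
Proof.
move=> g_inj g_two_sided; apply: leq_Nbound.
apply: leq_trans (card_two_sided_types n); rewrite leq_add2r.
have <- : #|[set g p | p : 'I_T * bool]%SET| = T.*2.
  by rewrite card_imset // card_prod card_ord card_bool muln2.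
by apply/subset_leq_card/fintype.subsetP => _ /imsetP[p _ ->].
Qed.

Section SteeringTime.
Variables (R : realType) (n m : nat) (A : 'I_m -> 'M[R]_n).
Hypothesis n_gt0 : (0 < n)%N.
Hypothesis A_nonexpansive : forall k x, seminormP (A k *m x) <= seminormP x.

(* Boundary points at times [s < t] with equal face types (up to sign) react
   alike to the switching applied after [t], so the segment [s, t) can be cut. *)
Lemma traj_shortcut sigma x0 s t T (b1 b2 : bool) : (s < t)%N -> (t <= T)%N ->
  seminormP (traj A sigma x0 T) < 1 ->
  seminormP (traj A sigma x0 s) = 1 -> seminormP (traj A sigma x0 t) = 1 ->
  face_type (signed b1 (traj A sigma x0 s)) = face_type (signed b2 (traj A sigma x0 t)) ->
  exists sigma', seminormP (traj A sigma' x0 (s + (T - t))) < 1.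
Proof.
move=> lt_st le_tT lt1_T s1 t1 eq_type.
pose tau w := sigma (t + w)%N; pose M := word_mx A (rev [seq tau w | w <- iota 0 (T - t)]).
have traj_T : traj A sigma x0 T = M *m traj A sigma x0 t.
  by rewrite -(subnKC le_tT) trajD traj_word_mx.
have M_nonexpansive z : seminormP (M *m z) <= seminormP z.
  exact: seminormP_word_mx.
have lt1_s : seminormP (M *m traj A sigma x0 s) < 1.
  rewrite -(seminormP_signed n_gt0 b1) -mulmx_signed.
  apply: (face_type_exit n_gt0 M_nonexpansive _ _ eq_type);
    rewrite ?(seminormP_signed n_gt0) //.
  by rewrite mulmx_signed (seminormP_signed n_gt0) -traj_T.
pose sigma' w := if (w < s)%N then sigma w else sigma (w + (t - s))%N.
exists sigma'; rewrite trajD.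
have -> : traj A sigma' x0 s = traj A sigma x0 s.
  by apply: eq_traj => w lt_ws; rewrite /sigma' lt_ws.
have -> : (fun w => sigma' (s + w)%N) = tau.
  by apply: funext => w; rewrite /sigma' ltnNge leq_addr /tau; congr sigma; lia.
by rewrite traj_word_mx.
Qed.

Lemma steering_shortcut sigma x0 T : seminormP x0 <= 1 -> (Nbound n < T)%N ->
  seminormP (traj A sigma x0 T) < 1 ->
  exists T' sigma', (T' < T)%N /\ seminormP (traj A sigma' x0 T') < 1.
Proof.
move=> x0_le1 lt_NT lt1_T.
have [[t [lt_tT lt1_t]] | never_inside] :=
  pselect (exists t, (t < T)%N /\ seminormP (traj A sigma x0 t) < 1).
  by exists t, sigma.
have on_boundary t : (t < T)%N -> seminormP (traj A sigma x0 t) = 1.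
  move=> lt_tT; apply: le_anti; rewrite (le_trans (seminormP_traj A_nonexpansive _ _ _)) //.
  by rewrite leNgt; apply/negP => lt1; apply: never_inside; exists t.
pose g (p : 'I_T * bool) := face_type (signed p.2 (traj A sigma x0 p.1)).
have /injectivePn[[t1 b1] [[t2 b2] neq_p eq_g]] : ~~ injectiveb g.
  apply/negP => /injectiveP /two_sided_injection_bound g_bound.
  suff : (T <= Nbound n)%N by rewrite leqNgt lt_NT.
  apply: g_bound => -[t b]; apply: face_type_two_sided => //.
  by rewrite (seminormP_signed n_gt0) on_boundary.
have t1_1 := on_boundary _ (ltn_ord t1); have t2_1 := on_boundary _ (ltn_ord t2).
rewrite /g /= in eq_g.
case: (ltngtP t1 t2) => [lt12 | lt21 | eq12].
- have [sigma' lt1] := traj_shortcut lt12 (ltnW (ltn_ord t2)) lt1_T t1_1 t2_1 eq_g.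
  by exists (t1 + (T - t2))%N, sigma'; split=> //; have := ltn_ord t2; lia.
- have [sigma' lt1] := traj_shortcut lt21 (ltnW (ltn_ord t1)) lt1_T t2_1 t1_1 (esym eq_g).
  by exists (t2 + (T - t1))%N, sigma'; split=> //; have := ltn_ord t1; lia.
- move/val_inj: eq12 neq_p eq_g => <-; case: b1; case: b2; rewrite ?eqxx //= => _.
    by move/eqP; rewrite (negbTE (face_type_oppN n_gt0 t1_1)).
  by move/esym/eqP; rewrite (negbTE (face_type_oppN n_gt0 t1_1)).
Qed.

Lemma steering_time_bound sigma x0 T : seminormP x0 <= 1 ->
  seminormP (traj A sigma x0 T) < 1 ->
  exists sigma', seminormP (traj A sigma' x0 (Nbound n)) < 1.
Proof.
move=> x0_le1; elim/ltn_ind: T sigma => T IH sigma lt1_T.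
have [le_TN | lt_NT] := leqP T (Nbound n).
  by exists sigma; apply: le_lt_trans (seminormP_traj_le A_nonexpansive _ _ le_TN) lt1_T.
have [T' [sigma' [lt_T'T lt1_T']]] := steering_shortcut x0_le1 lt_NT lt1_T.
exact: IH lt_T'T _ lt1_T'.
Qed.

End SteeringTime.

Lemma contracting_word_neq0 (R : realType) n m (A : 'I_m -> 'M[R]_n) s :
  (1 < n)%N -> contracting_word A s -> s != [::].
Proof.
move=> n_gt1 /(_ [set Ordinal (ltnW n_gt1)]%SET); apply: contraTneq => -> /=.
rewrite mul1mx -leNgt -(ler_pM2l (ltr0Sn R 1)) mulr1.
apply: le_trans (diff_le_seminormP _ (Ordinal (ltnW n_gt1)) (Ordinal n_gt1)).
by rewrite !mxE !inE eqxx /=; lra.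
Qed.

Theorem proposition1 (R : realType) (n m : nat) (A : 'I_m -> 'M[R]_n) :
  (2 <= n)%N ->
  (forall k, A k *m ones R n = ones R n) ->
  (forall k (x : 'cV[R]_n), seminormP (A k *m x) <= seminormP x) ->
  ((exists sigma : nat -> 'I_m, forall x0 : 'cV[R]_n,
      exists c : R, traj A sigma x0 @ \oo --> c *: ones R n)
   <->
   (forall x0 : 'cV[R]_n, @polP R n x0 ->
      exists sigma : nat -> 'I_m,
        interior (@polP R n) (traj A sigma x0 (Nbound n)))).
Proof.
move=> n_gt1 A_ones A_nonexpansive; have n_gt0 : (0 < n)%N := ltnW n_gt1.
split=> [[sigma consensus] x0 x0_le1 | steerable].
  have [c /(consensus_limit_interior n_gt0) [T lt1_T]] := consensus x0.
  have [sigma' lt1] := steering_time_bound n_gt0 A_nonexpansive x0_le1 lt1_T.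
  by exists sigma'; apply/interior_polP.
have [s s_contracting] : exists s, contracting_word A s.
  apply: (exists_contracting_word n_gt0 A_nonexpansive (N := Nbound n)) => x x_le1.
  by have [sigma /(interior_polP n_gt0)] := steerable x x_le1; exists sigma.
case: s s_contracting (contracting_word_neq0 n_gt1 s_contracting) => // a s0 s_contracting _.
exists (word_switching (a :: s0) a) => x0.
exact: word_switching_consensus.
Qed.
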